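(* If $X$ is an (infinite) $T_1$-space, then $\psi(X)\le nu_s(X)\cdot 2^{s(X)}$.
   Context: For a space $X$ and $A\subseteq X$, the $\theta$-closure of $A$ is $\mathrm{cl}_\theta(A):=\{y\in X:\ \overline{B}\cap A\neq\emptyset$ for every open neighborhood $B$ of $y\}$. The non-Urysohn number of $X$ with respect to singletons is $nu_s(X):=1+\sup\{|\mathrm{cl}_\theta(\{x\})|:x\in X\}$. $s(X)$ denotes the spread of $X$ (supremum of cardinalities of discrete subspaces, plus $\omega$) and $\psi(X)$ the pseudocharacter of $X$ (the supremum over $x\in X$ of the minimal cardinality of a family of open sets whose intersection is $\{x\}$). Throughout, ''space'' means infinite topological space. *)

From HB Require Import structures.
From mathcomp Require Import all_boot all_order.
From mathcomp Require Import all_classical all_reals all_analysis.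
Set Implicit Arguments. Unset Strict Implicit. Unset Printing Implicit Defensive.
Local Open Scope classical_set_scope.

Definition theta_closure (X : topologicalType) (A : set X) : set X :=
  [set y | forall B : set X, open B -> B y -> closure B `&` A !=set0].

Definition discrete_subspace (X : topologicalType) (D : set X) : Prop :=
  forall d, D d -> exists U : set X, [/\ open U, U d & U `&` D = [set d]].

Definition pseudochar_le (X : topologicalType) (K : Type) : Prop :=
  forall x : X, exists U : K -> set X,
    (forall i, open (U i)) /\ \bigcap_(i in [set: K]) U i = [set x].

From mathcomp Require Import all_boot all_order.
From mathcomp Require Import all_classical all_reals all_analysis.
Local Open Scope classical_set_scope.
Local Open Scope card_scope.

(* Fix p and let C be the theta-closure of {p}.  Every y outside C has an open
   neighbourhood V y whose closure misses p, and Shapirovskii's lemma yields a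
   discrete D outside C with X \ C included in cl D ∪ ⋃_(d ∈ D) V d.  Then {p} is
   the intersection of the open sets X \ {c} for c ∈ C \ {p} (closed points, T1),
   and X \ cl E, X \ cl (⋃_(d ∈ E) V d) for the subsets E of D whose closures
   miss p; a point of C is coded in A and a subset of D in B -> bool. *)

Lemma card_le_partial_inj {T U : Type} {S : set T} : S #<= [set: U] ->
  exists j : T -> option U, (forall x, S x -> j x <> None) /\
    (forall x y, S x -> S y -> j x = j y -> x = y).
Proof.
move/card_leP => [f].
exists (fun x => if pselect (S x) is left Sx
  then Some (val (f (exist _ x (mem_set Sx)))) else None).
split=> [x Sx|x y Sx Sy]; first by case: pselect.
case: pselect => // {}Sx; case: pselect => // {}Sy [/val_inj /('inj_f)].
by rewrite !inE => /(_ I I) [].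
Qed.

Lemma card_le_range {T : choiceType} {U : Type} (x0 : T) {S : set T} :
  S #<= [set: U] -> exists g : U -> T, S `<=` range g.
Proof.
move=> /card_le_partial_inj[j [jS j_inj]].
exists (fun u => xget x0 [set x | S x /\ j x = Some u]) => x Sx.
case E : (j x) => [u|]; last by have := jS x Sx.
exists u => //; case: xgetP => [y _ [Sy jy]|/(_ x)[]//].
by apply: j_inj; rewrite ?jy.
Qed.

Lemma card_le_powerset {T U : Type} {S : set T} : S #<= [set: U] ->
  exists E : (U -> bool) -> set T, forall S', S' `<=` S -> exists f, E f = S'.
Proof.
move=> /card_le_partial_inj[j [jS j_inj]].
exists (fun f => [set x | S x /\ oapp f false (j x)]) => S' S'S.
exists (fun u => `[< exists2 x, S' x & j x = Some u >]).
apply/seteqP; split=> [x [Sx]|x S'x]; last first.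
  split; first exact: S'S.
  by case E : (j x) => [u|]; [apply/asboolP; exists x|have := jS x (S'S x S'x)].
case E : (j x) => [u|] //= /asboolP[y S'y jy].
by rewrite (j_inj x y) ?E ?jy //; exact: S'S.
Qed.

Section ClosureAvoidance.
Context {X : topologicalType}.

Lemma closureI_open_nbhs (S W : set X) (y : X) :
  open_nbhs y W -> closure S y -> closure (S `&` W) y.
Proof.
move=> yW clSy N Ny.
by have [z [Sz [Nz Wz]]] := clSy _ (filterI Ny (open_nbhs_nbhs yW)); exists z.
Qed.

Lemma accessible_closure_set1 (x : X) :
  accessible_space X -> closure [set x] = [set x].
Proof. by move=> T1; apply/esym/closure_id; exact: accessible_closed_set1. Qed.

Definition avoid_closure (p : X) (S : set X) : set X :=
  ~` closure S `|` [set _ | closure S p].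

Lemma open_avoid_closure p S : open (avoid_closure p S).
Proof.
have [clSp|nclSp] := pselect (closure S p).
  rewrite (_ : avoid_closure p S = setT); first exact: openT.
  by apply/seteqP; split=> // y _; right.
rewrite (_ : avoid_closure p S = ~` closure S); first exact/closed_openC/closed_closure.
by apply/seteqP; split=> y; [case|left].
Qed.

Lemma avoid_closure_center p S : avoid_closure p S p.
Proof. by have [|] := pselect (closure S p); [right|left]. Qed.

Lemma avoid_closureN p S y :
  closure S y -> ~ closure S p -> ~ avoid_closure p S y.
Proof. by move=> clSy nclSp []. Qed.

End ClosureAvoidance.

Lemma not_theta_closure1_nbhs {X : topologicalType} (p : X) :
  exists V : X -> set X, forall y, ~ theta_closure [set p] y ->
    open_nbhs y (V y) /\ ~ closure (V y) p.
Proof.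
suff /choice[V HV] : forall y, exists W : set X, ~ theta_closure [set p] y ->
    open_nbhs y W /\ ~ closure W p by exists V.
move=> y; have [Cy|ny] := pselect (theta_closure [set p] y); first by exists set0.
apply: contrapT => nW; apply: ny => W oW Wy.
by exists p; split=> //; apply: contrapT => nclWp; apply: nW; exists W.
Qed.

Section Shapirovskii.
Variables (X : topologicalType) (Y : set X) (V : X -> set X).
Hypothesis V_nbhs : forall y, Y y -> open_nbhs y (V y).

Let separated (D : set X) :=
  D `<=` Y /\ forall d, D d -> ~ closure (D `&` V d `\ d) d.

(* Zorn's lemma is applied to end-extensions: points added later never lie in
   V d for an earlier d, so the union of a chain of separated sets is separated. *)
Let end_extends (D D' : set X) :=
  D `<=` D' /\ forall d, D d -> forall e, D' e -> ~ D e -> ~ V d e.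

Let separated_discrete D : separated D -> discrete_subspace D.
Proof.
move=> [DY Dsep] d Dd; have [oVd Vdd] := V_nbhs _ (DY _ Dd).
exists (V d `&` ~` closure (D `&` V d `\ d)); split=> //.
- exact/openI/closed_openC/closed_closure.
- by split; [|exact: Dsep].
apply/seteqP; split=> [e [[Vde ncl] De]|_ ->]; last by split=> //; split; [|exact: Dsep].
by apply: contrapT => ed; apply/ncl/subset_closure.
Qed.

Let end_extends_refl D : end_extends D D.
Proof. by split. Qed.

Let end_extends_trans {D1 D2 D3} :
  end_extends D1 D2 -> end_extends D2 D3 -> end_extends D1 D3.
Proof.
move=> [D12 V12] [D23 V23]; split=> [x /D12/D23 //|d D1d e D3e nD1e].
have [D2e|nD2e] := pselect (D2 e); first exact: V12.
exact: (V23 d (D12 _ D1d)).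
Qed.

Let chain_V_closed {F D D' d e} : total_on F end_extends ->
  F D -> F D' -> D d -> D' e -> V d e -> D e.
Proof.
move=> F_chain FD FD' Dd D'e Vde; apply: contrapT => nDe.
have [[D'D _]|[_ DD']] := F_chain _ _ FD' FD; first exact/nDe/D'D.
exact: DD' Dd _ D'e nDe Vde.
Qed.

Let bigcup_chain_separated {F} : F `<=` separated -> total_on F end_extends ->
  separated (\bigcup_(D in F) D).
Proof.
move=> F_separated F_chain.
split=> [x [D /F_separated[DY _] /DY //]|d [D FD Dd]].
have [_ Dsep] := F_separated _ FD.
apply: contra_not (Dsep d Dd); apply: closureS.
move=> e [[[D' FD' D'e] Vde] ed]; split=> //.
by split=> //; exact: (chain_V_closed F_chain FD FD' Dd D'e).
Qed.

Let bigcup_chain_end_extends {F D} : total_on F end_extends -> F D ->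
  end_extends D (\bigcup_(D in F) D).
Proof.
move=> F_chain FD; split=> [x Dx|d Dd e [D' FD' D'e] nDe Vde]; first by exists D.
exact/nDe/(chain_V_closed F_chain FD FD' Dd D'e).
Qed.

Let separated_setU1 {D y} : separated D -> Y y -> ~ closure D y ->
  ~ (\bigcup_(d in D) V d) y ->
  separated (D `|` [set y]) /\ end_extends D (D `|` [set y]).
Proof.
move=> [DY Dsep] Yy nclDy nVy.
have nV d : D d -> ~ V d y by move=> Dd Vdy; apply: nVy; exists d.
split; last by split=> [x|d Dd e [//|->] _]; [left|exact: nV].
split=> [x [/DY //|-> //]|d [Dd|->]].
- apply: contra_not (Dsep d Dd); apply: closureS => e [[[De|->] Vde] ed] //.
  by have := nV d Dd Vde.
- by apply: contra_not nclDy; apply: closureS => e [[[//|->] _] /(_ erefl)].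
Qed.

Lemma discrete_subspace_cover : exists D : set X,
  [/\ D `<=` Y, discrete_subspace D & Y `<=` closure D `|` \bigcup_(d in D) V d].
Proof.
pose R (s t : {D | separated D}) := `[< end_extends (sval s) (sval t) >].
have sep0 : separated set0 by split=> // d [].
have [[D sepD] Dmax] : exists t, premaximal R t.
  apply: (ZL_preorder (exist _ _ sep0)) => [t|r s t /asboolP rs /asboolP st|Ch ChR].
  - exact/asboolP/end_extends_refl.
  - exact/asboolP/(end_extends_trans rs st).
  have Chsep : [set sval t | t in Ch] `<=` separated by move=> _ [t _ <-]; exact: svalP.
  have Chtot : total_on [set sval t | t in Ch] end_extends.
    move=> _ _ [s Chs <-] [t Cht <-].
    by have [/asboolP|/asboolP] := ChR _ _ Chs Cht; [left|right].
  exists (exist _ _ (bigcup_chain_separated Chsep Chtot)) => t Cht.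
  by apply/asboolP/(bigcup_chain_end_extends Chtot); exists t.
exists D; split; [exact: sepD.1|exact: separated_discrete|move=> y Yy].
apply: contrapT => /not_orP[nclDy nVy].
have [sepDy DDy] := separated_setU1 sepD Yy nclDy nVy.
have /asboolP[DyD _] := Dmax (exist _ _ sepDy) (asboolT DDy).
by apply/nclDy/subset_closure/DyD; right.
Qed.

End Shapirovskii.

Theorem lemma3p9 (X : topologicalType) (A B : Type)
  (Xinf : infinite_set [set: X]) (XT1 : accessible_space X)
  (hA : forall x : X, theta_closure [set x] #<= [set: A])
  (hBinf : [set: nat] #<= [set: B])
  (hB : forall D : set X, discrete_subspace D -> D #<= [set: B]) :
  pseudochar_le X (option A * (B -> bool)).
Proof.
move=> p; pose C := theta_closure [set p].
have [V HV] := not_theta_closure1_nbhs p.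
have [D [DY Ddisc Dcov]] :=
  @discrete_subspace_cover X (~` C) V (fun y ny => (HV y ny).1).
have [g Cg] := card_le_range p (hA p).
have [E DE] := card_le_powerset (hB D Ddisc).
pose U i := avoid_closure p [set oapp g p i.1] `&` avoid_closure p (E i.2)
            `&` avoid_closure p (\bigcup_(d in E i.2) V d).
exists U; split=> [i|]; first by do 2?apply: openI; exact: open_avoid_closure.
apply/seteqP; split=> [y Uy|_ -> i _]; last by do 2?split; exact: avoid_closure_center.
apply: contrapT => yp.
have [Cy|nCy] := pselect (C y).
  have [a _ gay] := Cg _ Cy; have [[+ _] _] := Uy (Some a, fun=> false) I.
  rewrite /= gay; apply: avoid_closureN; rewrite accessible_closure_set1 //.
  exact: nesym.
have [yVy nclVyp] := HV y nCy.
case: (Dcov y nCy) => [clDy|[d Dd Vdy]].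
  have [f Ef] := DE (D `&` V y) (@subIsetl _ _ _).
  have [[_ +] _] := Uy (None, f) I; apply: avoid_closureN; rewrite /= Ef.
    exact: closureI_open_nbhs.
  by apply: contra_not nclVyp; apply: closureS; exact: subIsetr.
have [f Ef] : exists f, E f = [set d] by apply: DE => _ ->.
have [_ +] := Uy (None, f) I; apply: avoid_closureN; rewrite /= Ef bigcup_set1.
  exact: subset_closure.
exact: (HV d (DY _ Dd)).2.
Qed.
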